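(* Let $A \subseteq \mathbb{R}^d$ be locally finite, let $0 \le p \le d$, and let $\gamma$ be a $p$-cell of the Delaunay mosaic of $A$ with dual $(d-p)$-dimensional Voronoi cell $\gamma^*$. Let $z_0$ be the intersection point of the affine hulls $\mathrm{aff}(\gamma)$ and $\mathrm{aff}(\gamma^* )$, and let $R_0$ be the maximum distance between a point of $\gamma$ and a point of $\gamma^*$. Then the projection of the $p$-tile $J(\gamma,\gamma^* )$ to $\mathbb{R}^d$ (i.e. the set $\{x : (x,L) \in J(\gamma,\gamma^* ) \text{ for some } L\}$) is contained in the closed ball with center $z_0$ and radius $R_0$.
   Context: $\mathrm{Gr}(p,d)$ is the Grassmannian of linear $p$-planes in $\mathbb{R}^d$. The $p$-tile is $J(\gamma,\gamma^* ) = \{(x,L) \in \mathbb{R}^d \times \mathrm{Gr}(p,d) : x \in \text{the orthogonal projection of } \gamma \text{ onto } L+x, \text{ and } (L+x)\cap\gamma^* \neq \emptyset\}$. *)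

(* points of R^d are row vectors 'rV[R]_d over R : realType;
   linear p-planes are MathComp vector subspaces {vspace 'rV[R]_d} of dimension p. *)
From HB Require Import structures.
From mathcomp Require Import all_boot all_order all_algebra.
From mathcomp Require Import classical_sets cardinality reals.
Set Implicit Arguments. Unset Strict Implicit. Unset Printing Implicit Defensive.
Import Order.TTheory GRing.Theory Num.Theory.
Local Open Scope ring_scope.
Local Open Scope classical_set_scope.

Section Geometry.
Variables (R : realType) (d : nat).
Notation vec := 'rV[R]_d.

Definition dotp (u v : vec) : R := (u *m v^T) 0 0.
Definition dist (x y : vec) : R := Num.sqrt (dotp (x - y) (x - y)).

Definition locally_finite (A : set vec) : Prop :=
  forall (c : vec) (r : R), finite_set [set a | A a /\ dist a c <= r].

Definition aff (S : set vec) : set vec :=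
  [set x | exists (n : nat) (s : 'I_n -> vec) (w : 'I_n -> R),
     (forall i, S (s i)) /\ \sum_(i < n) w i = 1 /\ x = \sum_(i < n) w i *: s i].
Definition conv (S : set vec) : set vec :=
  [set x | exists (n : nat) (s : 'I_n -> vec) (w : 'I_n -> R),
     (forall i, S (s i)) /\ (forall i, 0 <= w i) /\
     \sum_(i < n) w i = 1 /\ x = \sum_(i < n) w i *: s i].

Definition affdim (S : set vec) (p : nat) : Prop :=
  exists (a0 : vec) (U : {vspace vec}),
    S a0 /\ \dim U = p /\ forall x, aff S x <-> (x - a0) \in U.

Definition vdom (A : set vec) (a : vec) : set vec :=
  [set x | forall b, A b -> dist x a <= dist x b].
Definition vcell (A Q : set vec) : set vec :=
  [set x | forall a, Q a -> vdom A a x].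

(* Q generates a p-cell conv Q of the Delaunay mosaic of A, with dual Voronoi
   cell vcell A Q: Q is nonempty, the Voronoi cell is nonempty, Q is exactly
   the set of points of A whose domains contain that Voronoi cell, and
   conv Q has dimension p. *)
Definition delaunay_generator (A Q : set vec) (p : nat) : Prop :=
  Q `<=` A /\ Q !=set0 /\ vcell A Q !=set0 /\
  Q = [set a | A a /\ vcell A Q `<=` vdom A a] /\
  affdim (conv Q) p.

Definition grassmannian (p : nat) : set {vspace vec} := [set L | \dim L = p].

Definition orth_proj_onto (L : {vspace vec}) (x y z : vec) : Prop :=
  (z - x) \in L /\ forall v, v \in L -> dotp (y - z) v = 0.

Definition ptile (p : nat) (g gs : set vec) : set (vec * {vspace vec}) :=
  [set xL | grassmannian p xL.2 /\
     (exists y, g y /\ orth_proj_onto xL.2 xL.1 y xL.1) /\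
     (exists w, gs w /\ (w - xL.1) \in xL.2)].

Definition is_max_dist (g gs : set vec) (R0 : R) : Prop :=
  (forall y w, g y -> gs w -> dist y w <= R0) /\
  (exists y w, g y /\ gs w /\ dist y w = R0).

End Geometry.

From HB Require Import structures.
From mathcomp Require Import all_boot all_order all_algebra.
From mathcomp Require Import classical_sets cardinality reals.
From mathcomp Require Import ring.
Set Implicit Arguments. Unset Strict Implicit. Unset Printing Implicit Defensive.
Import Order.TTheory GRing.Theory Num.Theory.
Local Open Scope ring_scope.
Local Open Scope classical_set_scope.

(* Every point of the Voronoi cell is equidistant from the points of Q, so
   aff(gamma) and aff(gamma* ) are orthogonal and meet at z0; hence for
   y in gamma and w in gamma* the segment [y, w] is seen from z0 at a right
   angle.  If (x, L) is in the tile with witnesses y and w, then y - x is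
   orthogonal to L, which contains w - x, so [y, w] is also seen from x at a
   right angle.  By Thales, x and z0 both lie on the sphere with diameter
   [y, w], so |x - z0| <= |y - w| <= R0. *)

Section InnerProduct.
Variables (R : realType) (d : nat).
Notation vec := 'rV[R]_d.

Lemma dotpE (u v : vec) : dotp u v = \sum_j u 0 j * v 0 j.
Proof. by rewrite /dotp mxE; apply: eq_bigr => j _; rewrite mxE. Qed.

Lemma dotpC (u v : vec) : dotp u v = dotp v u.
Proof. by rewrite !dotpE; apply: eq_bigr => j _; rewrite mulrC. Qed.

Lemma dotpBl (u v w : vec) : dotp (u - v) w = dotp u w - dotp v w.
Proof. by rewrite !dotpE -sumrB; apply: eq_bigr => j _; rewrite !mxE mulrBl. Qed.

Lemma dotp_suml n (w : 'I_n -> R) (s : 'I_n -> vec) (c : vec) :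
  dotp (\sum_(i < n) w i *: s i) c = \sum_(i < n) w i * dotp (s i) c.
Proof.
rewrite /dotp mulmx_suml summxE; apply: eq_bigr => i _.
by rewrite -scalemxAl [LHS]mxE.
Qed.

Lemma dotp_ge0 (u : vec) : 0 <= dotp u u.
Proof. by rewrite dotpE sumr_ge0 // => j _; rewrite -expr2 sqr_ge0. Qed.

Lemma dist_sqr_eq (x y u v : vec) :
  dist x y = dist u v -> dotp (x - y) (x - y) = dotp (u - v) (u - v).
Proof. by move/eqP; rewrite eqr_sqrt ?dotp_ge0 // => /eqP. Qed.

Lemma dotp_sqr_diff (a b v u : vec) :
  dotp (v - a) (v - a) - dotp (v - b) (v - b)
    - (dotp (u - a) (u - a) - dotp (u - b) (u - b))
  = - 2 * dotp (a - b) (v - u).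
Proof.
rewrite !dotpE -!sumrB mulr_sumr; apply: eq_bigr => j _; rewrite !mxE; ring.
Qed.

Lemma right_angles_identity (x y z w : vec) :
  dotp (x - z) (x - z) + dotp (y + w - x - z) (y + w - x - z)
  = dotp (y - w) (y - w) + 2 * (dotp (y - z) (w - z) + dotp (y - x) (w - x)).
Proof.
rewrite !dotpE -!big_split mulr_sumr -big_split; apply: eq_bigr => j _.
by rewrite !mxE /=; ring.
Qed.

(* Thales: [y, w] is a diameter of every sphere through points seeing it at
   a right angle. *)
Lemma dist_le_of_right_angles (x y z w : vec) :
  dotp (y - z) (w - z) = 0 -> dotp (y - x) (w - x) = 0 ->
  dist x z <= dist y w.
Proof.
move=> yzw yxw; rewrite /dist ler_sqrt ?dotp_ge0 //.
have := right_angles_identity x y z w; rewrite yzw yxw addr0 mulr0 addr0 => <-.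
by rewrite lerDl dotp_ge0.
Qed.

End InnerProduct.

Section AffineHull.
Variables (R : realType) (d : nat).
Notation vec := 'rV[R]_d.
Implicit Types (S T : set vec) (c : vec).

Lemma sub_aff S : S `<=` aff S.
Proof.
move=> x Sx; exists 1%N, (fun _ => x), (fun _ => 1).
by rewrite !big_ord1 scale1r.
Qed.

Lemma conv_sub_aff S : conv S `<=` aff S.
Proof. by move=> x [n [s [w [Ss [_ [w1 ->]]]]]]; exists n, s, w. Qed.

Lemma aff_dotp_const S c k x :
  aff S x -> (forall s, S s -> dotp s c = k) -> dotp x c = k.
Proof.
move=> [n [s [w [Ss [w1 ->]]]]] Sk.
rewrite dotp_suml; under eq_bigr do rewrite Sk //.
by rewrite -mulr_suml w1 mul1r.
Qed.

Lemma aff_dotp_eq S c :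
  (forall s t, S s -> S t -> dotp s c = dotp t c) ->
  forall x y, aff S x -> aff S y -> dotp x c = dotp y c.
Proof.
move=> Sc x y Sx Sy; apply: (aff_dotp_const Sx) => s Ss.
by symmetry; apply: (aff_dotp_const Sy) => t St; apply: Sc.
Qed.

Lemma aff_orthogonal S T :
  (forall a b v u, S a -> S b -> T v -> T u -> dotp (a - b) (v - u) = 0) ->
  forall a b v u, aff S a -> aff S b -> aff T v -> aff T u ->
    dotp (a - b) (v - u) = 0.
Proof.
move=> ST a b v u Sa Sb Tv Tu.
have orthS v' u' : T v' -> T u' -> dotp (a - b) (v' - u') = 0.
  move=> Tv' Tu'; apply/eqP; rewrite dotpBl subr_eq0; apply/eqP.
  apply: aff_dotp_eq Sa Sb => s t Ss St.
  by apply/eqP; rewrite -subr_eq0 -dotpBl ST.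
apply/eqP; rewrite dotpC dotpBl subr_eq0; apply/eqP.
apply: aff_dotp_eq Tv Tu => s t Ts Tt.
by apply/eqP; rewrite -subr_eq0 -dotpBl dotpC orthS.
Qed.

End AffineHull.

Section VoronoiCell.
Variables (R : realType) (d : nat) (A Q : set 'rV[R]_d).
Hypothesis QA : Q `<=` A.

Lemma vcell_dist_eq v a b :
  vcell A Q v -> Q a -> Q b -> dist v a = dist v b.
Proof.
move=> Vv Qa Qb; apply/eqP.
by rewrite eq_le (Vv a Qa b (QA Qb)) (Vv b Qb a (QA Qa)).
Qed.

Lemma vcell_orthogonal a b v u :
  Q a -> Q b -> vcell A Q v -> vcell A Q u -> dotp (a - b) (v - u) = 0.
Proof.
move=> Qa Qb Vv Vu; have := dotp_sqr_diff a b v u.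
rewrite (dist_sqr_eq (vcell_dist_eq Vv Qa Qb)) (dist_sqr_eq (vcell_dist_eq Vu Qa Qb)).
by rewrite !subrr => /esym/eqP; rewrite mulf_eq0 oppr_eq0 pnatr_eq0 => /eqP.
Qed.

End VoronoiCell.

Theorem lemma3p3 (R : realType) (d p : nat) (A Q : set 'rV[R]_d)
    (z0 : 'rV[R]_d) (R0 : R) :
  locally_finite A -> (p <= d)%N -> delaunay_generator A Q p ->
  aff (conv Q) z0 -> aff (vcell A Q) z0 ->
  is_max_dist (conv Q) (vcell A Q) R0 ->
  forall x : 'rV[R]_d,
    (exists L : {vspace 'rV[R]_d}, ptile p (conv Q) (vcell A Q) (x, L)) ->
    dist x z0 <= R0.
Proof.
move=> _ _ [QA _] z0Q z0V [maxR0 _] x [L [_ [[y [Qy [_ yx_orth_L]]] [w [Vw wxL]]]]].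
have conv_orth a b v u : conv Q a -> conv Q b -> vcell A Q v -> vcell A Q u ->
    dotp (a - b) (v - u) = 0.
  move=> /conv_sub_aff Qa /conv_sub_aff Qb /sub_aff Vv /sub_aff Vu.
  exact: aff_orthogonal (vcell_orthogonal QA) _ _ _ _ Qa Qb Vv Vu.
have right_z0 : dotp (y - z0) (w - z0) = 0.
  exact: aff_orthogonal conv_orth _ _ _ _ (sub_aff Qy) z0Q (sub_aff Vw) z0V.
have right_x : dotp (y - x) (w - x) = 0 by apply: yx_orth_L.
exact: le_trans (dist_le_of_right_angles right_z0 right_x) (maxR0 _ _ Qy Vw).
Qed.
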